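(* The number of $\lfloor\sqrt n\rfloor$-bounded walks with $n$ steps is $\Omega(2^n/\sqrt n)$ as $n\to\infty$.
   Context: A ballot sequence is a 0-1 sequence in which every nonempty prefix contains strictly more 1's than 0's. A 0-1 sequence corresponds to a lattice walk starting at the origin, where each term $1$ is a step $(1,1)$ and each term $0$ is a step $(1,-1)$; a ballot walk is the walk of a ballot sequence. For a positive integer $b$, a $b$-bounded walk is a ballot walk that never visits a point with $y>2b$ and whose endpoint has $y>b$. *)

From HB Require Import structures.
From mathcomp Require Import all_boot all_order all_algebra.
From mathcomp Require Import reals.
Set Implicit Arguments. Unset Strict Implicit. Unset Printing Implicit Defensive.

(* A 0-1 sequence is a seq bool; true = 1 = step (1,1), false = 0 = step (1,-1).
   The y-coordinate after the prefix of length k is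
   (number of 1's) - (number of 0's) in [take k s]. *)
Definition ones (s : seq bool) : nat := count id s.
Definition zeros (s : seq bool) : nat := count negb s.

Definition ballot (s : seq bool) : bool :=
  [forall k : 'I_(size s).+1, (0 < k)%N ==> (zeros (take k s) < ones (take k s))%N].

(* b-bounded walk: ballot walk, never visits a point with y > 2b
   (i.e. every visited point, prefix of length 0..size s, has y <= 2b),
   and whose endpoint has y > b. *)
Definition bounded_walk (b : nat) (s : seq bool) : bool :=
  [&& ballot s,
      [forall k : 'I_(size s).+1, (ones (take k s) <= b.*2 + zeros (take k s))%N]
    & (b + zeros s < ones s)%N].

Definition isqrt (n : nat) : nat := \max_(b < n.+1 | (b * b <= n)%N) b.

Definition num_bounded_walks (n : nat) : nat :=
  #|[set t : n.-tuple bool | bounded_walk (isqrt n) t]|.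

From HB Require Import structures.
From mathcomp Require Import all_boot all_order all_algebra.
From mathcomp Require Import reals.
From mathcomp Require Import ring lra zify.
Set Implicit Arguments. Unset Strict Implicit. Unset Printing Implicit Defensive.

(* Let b = isqrt n and m = b + b/2 + 1, and count only the walks that climb from
   0 to height m without returning to 0 and then stay in the strip (b, 2b] of
   width W = b + 1.

   In the strip, f(u) = u(W - u) (W^2 + u(W - u)) with u = y - b vanishes just
   outside the strip and satisfies f(u+1) + f(u-1) >= (2 - 12/W^2) f(u).
   Since the number of remaining steps is below W^2, this rate costs only a
   constant factor, so a constant fraction of the 2^L continuations from height m
   stays in the strip.

   For the climb, freeze the walk at 0 and at m.  The height min(y, m) is
   harmonic, and the time spent strictly between 0 and m is controlled by the
   potential y (m^2 - y^2), whose Laplacian is -6y; hence within n steps the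
   walk from 1 is frozen at m with probability at least about 1/m.  As m is of
   order sqrt n, this gives the bound c 2^n / sqrt n. *)

(** * Counting walks with a two-phase automaton *)

Fixpoint bitseqs (n : nat) : seq (seq bool) :=
  if n is n'.+1 then [seq true :: s | s <- bitseqs n'] ++ [seq false :: s | s <- bitseqs n']
  else [:: [::]].

Lemma mem_map_cons (T : eqType) (x y : T) (s : seq T) (l : seq (seq T)) :
  (x :: s \in map (cons y) l) = (x == y) && (s \in l).
Proof.
apply/mapP/andP => [[t Ht [-> ->]]|[/eqP -> Hs]]; first by rewrite eqxx.
by exists s.
Qed.

Lemma mem_bitseqs n s : (s \in bitseqs n) = (size s == n).
Proof.
elim: n s => [|n IH] [|x s] //=.
- by rewrite mem_cat; apply/negbTE/orP; case=> /mapP [].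
- by rewrite mem_cat !mem_map_cons IH eqSS; case: x; rewrite ?orbF.
Qed.

Lemma uniq_bitseqs n : uniq (bitseqs n).
Proof.
elim: n => //= n IH.
rewrite cat_uniq !map_inj_uniq ?IH //=; try by move=> ? ? [].
by rewrite andbT; apply/hasPn => _ /mapP [u _ ->]; rewrite mem_map_cons.
Qed.

Lemma count_bitseqsS (P : pred (seq bool)) n :
  count P (bitseqs n.+1) =
  count (fun s => P (true :: s)) (bitseqs n) + count (fun s => P (false :: s)) (bitseqs n).
Proof. by rewrite /= count_cat !count_map. Qed.

Lemma card_tuple_count n (P : pred (seq bool)) :
  #|[set t : n.-tuple bool | P t]| = count P (bitseqs n).
Proof.
rewrite cardE /enum_mem size_filter -enumT.
rewrite (eq_count (a2 := P \o val)) => [|t]; last exact: in_set.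
rewrite -(count_map val); apply/permP/uniq_perm.
- by rewrite map_inj_uniq ?enum_uniq //; exact: val_inj.
- exact: uniq_bitseqs.
move=> s; rewrite mem_bitseqs; apply/mapP/idP => [[t _ ->]|Hs]; first by rewrite size_tuple.
by exists (Tuple Hs); rewrite ?mem_enum.
Qed.

Lemma count_andl (T : Type) (c : bool) (p : pred T) (l : seq T) :
  count (fun x => c && p x) l = if c then count p l else 0.
Proof. by case: c => //; exact: count_pred0. Qed.

(* The walk [s] from height [y] is accepted by [staged_walk b m false y] when it
   stays in [1, m] until it first reaches [m] and then stays in the strip
   (b, 2b] (the phase flag [in_strip] records which of the two it is in). *)
Fixpoint staged_walk (b m : nat) (in_strip : bool) (y : nat) (s : seq bool) : bool :=
  if s is x :: s' then
    let y' := if x then y.+1 else y.-1 in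
    if in_strip then (b < y' <= b.*2) && staged_walk b m true y' s'
    else (x || (1 < y)) && (y' <= m) && staged_walk b m (y' == m) y' s'
  else in_strip.

Definition staged_count b m in_strip y L := count (staged_walk b m in_strip y) (bitseqs L).

Lemma staged_count_stripS b m y L :
  staged_count b m true y L.+1 =
  (if b < y.+1 <= b.*2 then staged_count b m true y.+1 L else 0) +
  (if b < y.-1 <= b.*2 then staged_count b m true y.-1 L else 0).
Proof. by rewrite /staged_count count_bitseqsS /= !count_andl. Qed.

Lemma staged_count_climbS b m y L :
  staged_count b m false y L.+1 =
  (if y.+1 <= m then staged_count b m (y.+1 == m) y.+1 L else 0) +
  (if (1 < y) && (y.-1 <= m) then staged_count b m (y.-1 == m) y.-1 L else 0).
Proof. by rewrite /staged_count count_bitseqsS /= !count_andl. Qed.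

Lemma staged_count_from0 b m L : 1 < m ->
  staged_count b m false 0 L.+1 = staged_count b m false 1 L.
Proof. by move=> Hm; rewrite staged_count_climbS /= (ltnW Hm) (ltn_eqF Hm) addn0. Qed.

Definition bounded_walk_from (b y : nat) (s : seq bool) : Prop :=
  (forall k, 0 < k <= size s ->
     zeros (take k s) < y + ones (take k s) <= b.*2 + zeros (take k s))
  /\ b + zeros s < y + ones s.

Lemma bounded_walk_from_cons b y (x : bool) s :
  0 < (if x then y.+1 else y.-1) <= b.*2 ->
  bounded_walk_from b (if x then y.+1 else y.-1) s -> bounded_walk_from b y (x :: s).
Proof.
rewrite /bounded_walk_from /ones /zeros.
case: x => /= Hy' [Hpre Hend]; split; try lia;
  by case=> [|[|k]] //= Hk; rewrite ?take0 /=; try have := Hpre k.+1 Hk; lia.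
Qed.

Lemma staged_walk_bounded_from b m in_strip y (s : seq bool) : b < m <= b.*2 ->
  in_strip ==> (b < y <= b.*2) -> staged_walk b m in_strip y s -> bounded_walk_from b y s.
Proof.
move=> Hm; elim: s in_strip y => [|x s IH] [] y //= Hy.
- by move=> _; rewrite /bounded_walk_from /ones /zeros /=; split=> [k|]; lia.
- case/andP=> Hy' Hs; apply: bounded_walk_from_cons; first by move: Hy'; lia.
  exact: IH Hs.
- case/andP=> /andP [Hx Hy'] Hs; apply: bounded_walk_from_cons.
    by move: Hx Hy'; case: x {Hs} => /=; lia.
  by apply: IH Hs; apply/implyP => /eqP ->.
Qed.

Lemma bounded_walk_from0 b s : bounded_walk_from b 0 s -> bounded_walk b s.
Proof.
move=> [Hpre Hend].
have Hk (k : 'I_(size s).+1) :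
    0 < k -> zeros (take k s) < ones (take k s) <= b.*2 + zeros (take k s).
  by move=> Hk; apply: Hpre; rewrite Hk -ltnS ltn_ord.
apply/and3P; split => //.
- by apply/forallP => k; apply/implyP => /Hk /andP [].
- by apply/forallP => k; case: (posnP k) => [->|/Hk /andP [] //]; rewrite take0.
Qed.

Lemma staged_count_le_card b m n : b < m <= b.*2 ->
  staged_count b m false 0 n <= #|[set t : n.-tuple bool | bounded_walk b t]|.
Proof.
move=> Hm; rewrite card_tuple_count; apply: sub_count => s.
by move/(staged_walk_bounded_from (in_strip := false) Hm isT)/bounded_walk_from0.
Qed.

Lemma isqrt_sq_le n : isqrt n * isqrt n <= n.
Proof.
by apply: (big_ind (fun x => x * x <= n)) => // x y Hx Hy; rewrite /maxn; case: ifP.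
Qed.

Lemma isqrtS_sq_gt n : n < (isqrt n).+1 * (isqrt n).+1.
Proof.
rewrite ltnNge; apply/negP => H.
have Hb : (isqrt n).+1 < n.+1 by rewrite ltnS; apply: leq_trans H; exact: leq_pmulr.
have := @leq_bigmax_cond _ (fun i : 'I_n.+1 => i * i <= n) val (Ordinal Hb) H.
by rewrite -/(isqrt n) /= ltnn.
Qed.

Import Order.TTheory GRing.Theory Num.Theory.
Local Open Scope ring_scope.

(** * The walk frozen at 0 and at m *)

Section AbsorbedWalk.
Context {R : realFieldType}.
Variable m : nat.
Implicit Types (f g : nat -> R) (t y z : nat).

(* The transfer operator of the simple walk on [nat] frozen at [0] and at the
   heights [>= m]; a frozen walk still has two continuations per step.  Hence
   [absorb_iter t f y] sums, over the [2 ^ t] step sequences of length [t],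
   the value of [f] at the final height of the walk from [y] frozen in this way. *)
Definition absorb_step f y : R :=
  if (y == 0)%N || (m <= y)%N then 2 * f y else f y.+1 + f y.-1.

Definition absorb_iter t f := iter t absorb_step f.

Lemma absorb_iter_lin (a c : R) f g h : (forall z, h z = a * f z + c * g z) ->
  forall t y, absorb_iter t h y = a * absorb_iter t f y + c * absorb_iter t g y.
Proof.
move=> Hh; elim=> [|t IH] y /=; first exact: Hh.
by rewrite /absorb_step; case: ifP => _; rewrite !IH; ring.
Qed.

Lemma absorb_iterZ (c : R) f t y :
  absorb_iter t (fun z => c * f z) y = c * absorb_iter t f y.
Proof. by rewrite (@absorb_iter_lin c 0 f f) => [|z]; ring. Qed.

Lemma absorb_iter_le f g : (forall z, f z <= g z) ->
  forall t y, absorb_iter t f y <= absorb_iter t g y.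
Proof.
move=> Hfg; elim=> [|t IH] y /=; first exact: Hfg.
by rewrite /absorb_step; case: ifP => _; [rewrite ler_pM2l ?IH | rewrite lerD].
Qed.

Lemma absorb_iter_ge0 f : (forall z, 0 <= f z) -> forall t y, 0 <= absorb_iter t f y.
Proof.
move=> Hf; elim=> [|t IH] y /=; first exact: Hf.
by rewrite /absorb_step; case: ifP => _; rewrite ?mulr_ge0 ?addr_ge0.
Qed.

Lemma absorb_iter_frozen f t y : (y == 0)%N || (m <= y)%N ->
  absorb_iter t f y = 2 ^+ t * f y.
Proof.
move=> Hy; elim: t => [|t IH] /=; first by rewrite mul1r.
by rewrite /absorb_step Hy -/(absorb_iter t f) IH exprS mulrA.
Qed.

Lemma absorb_iterSr f t : absorb_iter t.+1 f = absorb_iter t (absorb_step f).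
Proof. by rewrite /absorb_iter iterSr. Qed.

Lemma absorb_iterS_inner f t y : (0 < y < m)%N ->
  absorb_iter t.+1 f y = absorb_iter t f y.+1 + absorb_iter t f y.-1.
Proof.
case/andP=> Hy Hym; rewrite /absorb_iter iterS /absorb_step.
by rewrite (negbTE (lt0n_neq0 Hy)) leqNgt Hym.
Qed.

Definition frozen_top z : R := if (m <= z)%N then 1 else 0.
Definition height_below z : R := if (z < m)%N then z%:R else 0.
Definition height_cap z : R := (minn z m)%:R.
Definition cubic_weight z : R := if (z <= m)%N then z%:R * (m%:R ^+ 2 - z%:R ^+ 2) else 0.

Lemma height_capE z : height_cap z = m%:R * frozen_top z + 1 * height_below z.
Proof.
by rewrite /height_cap /frozen_top /height_below /minn; case: leqP => _; ring.
Qed.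

Lemma absorb_step_height_cap z : (0 < m)%N ->
  absorb_step height_cap z = 2 * height_cap z.
Proof.
move=> Hm; rewrite /absorb_step; case: ifP => // /norP [Hz Hmz].
rewrite -ltnNge in Hmz; rewrite /height_cap /minn Hmz (leq_ltn_trans (leq_pred _) Hmz).
case: z Hz Hmz => // z _ Hmz /=; case: ltnP => [_|Hm']; first by rewrite -!natr1; ring.
have -> : m = z.+2 by apply/eqP; rewrite eqn_leq Hm' Hmz.
by rewrite -!natr1; ring.
Qed.

Lemma absorb_step_height_below z : absorb_step height_below z <= 2 * height_below z.
Proof.
rewrite /absorb_step; case: ifP => // /norP [Hz Hmz].
rewrite -ltnNge in Hmz; rewrite /height_below Hmz.
case: z Hz Hmz => // z _ Hmz /=; rewrite (ltnW Hmz).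
have Hz0 := ler0n R z; case: ifP => _; rewrite -!natr1 ?mulr0n; lra.
Qed.

Lemma absorb_step_cubic_weight z :
  absorb_step cubic_weight z = 2 * cubic_weight z - 6 * height_below z.
Proof.
rewrite /absorb_step /cubic_weight /height_below; case: ifP => [/orP [/eqP ->|Hmz]|/norP [Hz Hmz]].
- by rewrite leq0n if_same; ring.
- by rewrite ltnNge Hmz /=; ring.
rewrite -ltnNge in Hmz; rewrite Hmz (ltnW Hmz).
case: z Hz Hmz => // z _ Hmz /=; rewrite (ltnW (ltnW Hmz)) -!natr1; ring.
Qed.

Lemma cubic_weight_ge0 z : 0 <= cubic_weight z.
Proof.
rewrite /cubic_weight; case: ifP => // Hz.
rewrite mulr_ge0 // subr_ge0 lerXn2r ?nnegrE ?ler_nat //.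
Qed.

Lemma absorb_iter_height_cap t y : (0 < m)%N ->
  absorb_iter t height_cap y = 2 ^+ t * height_cap y.
Proof.
move=> Hm; elim: t y => [|t IH] y; first by rewrite /= mul1r.
rewrite absorb_iterSr (@absorb_iter_lin 2 0 height_cap height_cap); last first.
  by move=> z; rewrite absorb_step_height_cap //; ring.
by rewrite IH exprS; ring.
Qed.

(* [cubic_weight] decreases by [6 * height_below] at each step while staying
   nonnegative, so the total mass spent below [m] is bounded. *)
Lemma absorb_iter_height_below_bound t : (2 <= m)%N ->
  3 * t%:R * absorb_iter t height_below 1 <=
    2 ^+ t * (m%:R ^+ 2 - 1) - absorb_iter t cubic_weight 1.
Proof.
move=> Hm; elim: t => [|t IH].
  by rewrite /= /cubic_weight (leq_trans _ Hm) // expr0 expr1n; lra.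
have Hbelow : absorb_iter t.+1 height_below 1 <= 2 * absorb_iter t height_below 1.
  rewrite absorb_iterSr -absorb_iterZ.
  by apply: absorb_iter_le => z; exact: absorb_step_height_below.
have Hcubic : absorb_iter t.+1 cubic_weight 1 =
    2 * absorb_iter t cubic_weight 1 + (-6) * absorb_iter t height_below 1.
  rewrite absorb_iterSr (@absorb_iter_lin 2 (-6) cubic_weight height_below) // => z.
  by rewrite absorb_step_cubic_weight; ring.
rewrite Hcubic exprS -natr1.
have Ht : (0 : R) <= t%:R := ler0n _ _.
nra.
Qed.

(* The height [min z m] is harmonic, so after [t] steps the walk from [1] has
   been frozen at [m] with "probability" about [1/m]. *)
Lemma absorb_iter_frozen_top_lower t : (2 <= m)%N ->
  3 * t%:R * (2 ^+ t - m%:R * absorb_iter t frozen_top 1) <= 2 ^+ t * (m%:R ^+ 2 - 1).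
Proof.
move=> Hm.
have Hcap := @absorb_iter_height_cap t 1 (ltnW Hm).
rewrite (@absorb_iter_lin m%:R 1 frozen_top height_below height_cap) in Hcap;
  last exact: height_capE.
rewrite (_ : height_cap 1 = 1) ?mulr1 in Hcap; last by rewrite /height_cap /minn Hm.
have Hbelow : 2 ^+ t - m%:R * absorb_iter t frozen_top 1 = absorb_iter t height_below 1.
  by rewrite -Hcap; ring.
rewrite Hbelow; apply: le_trans (absorb_iter_height_below_bound t Hm) _.
by rewrite lerBlDr lerDl absorb_iter_ge0 // => z; exact: cubic_weight_ge0.
Qed.

Lemma absorb_iter_frozen_top_ge t : (2 <= m)%N -> (8 * m ^ 2 <= 21 * t + 8)%N ->
  2 ^+ t / 8 <= m%:R * absorb_iter t frozen_top 1.
Proof.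
move=> Hm Hmt; have Ht : (0 : R) < t%:R by rewrite ltr0n; lia.
have Hsq : m%:R ^+ 2 - 1 <= 21 / 8 * t%:R :> R.
  by move: Hmt; rewrite -(ler_nat R) natrD !natrM expr2; lra.
have := absorb_iter_frozen_top_lower t Hm.
set P := m%:R * _; set T : R := 2 ^+ t => Hlower.
have HT : 0 < T by rewrite exprn_gt0.
have Hbound : T * (m%:R ^+ 2 - 1) <= T * (21 / 8 * t%:R) by rewrite ler_wpM2l // ltW.
have : t%:R * (3 * (T - P)) <= t%:R * (21 / 8 * T).
  rewrite (_ : _ * (_ * T) = T * (21 / 8 * t%:R)); last by ring.
  by apply: le_trans Hbound; rewrite mulrA [t%:R * 3]mulrC.
by rewrite ler_pM2l //; lra.
Qed.

End AbsorbedWalk.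

(** * A test function for the strip *)

Lemma bernoulli_ler (R : realFieldType) (x : R) k :
  0 <= x <= 1 -> 1 - k%:R * x <= (1 - x) ^+ k.
Proof.
case/andP=> x_ge0 x_le1; elim: k => [|k IH]; first by rewrite mul0r subr0 expr0.
have hp : 0 <= (1 - x) ^+ k by rewrite exprn_ge0 // subr_ge0.
have hk : (0 : R) <= k%:R := ler0n _ _.
have hkx : 0 <= k%:R * x ^+ 2 by rewrite mulr_ge0 // sqr_ge0.
rewrite exprSr -natr1; nra.
Qed.

Section Strip.
Context {R : realFieldType}.
Variable b : nat.
Implicit Types (u : R) (y z : nat).

Definition strip_width : R := b.+1%:R.
Definition strip_parabola u : R := u * (strip_width - u).
Definition strip_quartic u : R := strip_parabola u * (strip_parabola u + strip_width ^+ 2).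

(* Vanishes on the two heights [b] and [2b+1] just outside the strip. *)
Definition strip_test y : R :=
  if (b < y <= b.*2)%N then strip_quartic (y - b)%:R else 0.

Definition strip_rate : R := 2 - 12 / strip_width ^+ 2.
Definition strip_test_max : R := 5 * strip_width ^+ 4 / 16.

Lemma strip_width_gt0 : 0 < strip_width.
Proof. by rewrite ltr0Sn. Qed.

Lemma strip_test_max_gt0 : 0 < strip_test_max.
Proof. by rewrite divr_gt0 // mulr_gt0 // exprn_gt0 // strip_width_gt0. Qed.

Lemma strip_testE z : (b <= z <= b.*2.+1)%N -> strip_test z = strip_quartic (z - b)%:R.
Proof.
case/andP=> Hbz Hz; rewrite /strip_test; case: ifP => // /negbT.
rewrite negb_and -leqNgt -ltnNge => /orP [H|H].
  have -> : z = b by apply/eqP; rewrite eqn_leq H Hbz.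
  by rewrite subnn /strip_quartic /strip_parabola; ring.
have -> : z = b.*2.+1 by apply/eqP; rewrite eqn_leq H Hz.
have -> : (b.*2.+1 - b = b.+1)%N by rewrite -addnn; lia.
by rewrite /strip_quartic /strip_parabola /strip_width; ring.
Qed.

Lemma strip_parabola_bounds u : 0 <= u <= strip_width ->
  0 <= strip_parabola u <= strip_width ^+ 2 / 4.
Proof.
case/andP=> Hu0 HuW; rewrite mulr_ge0 ?subr_ge0 //=.
by have := sqr_ge0 (u - strip_width / 2); rewrite /strip_parabola; lra.
Qed.

(* The discrete Laplacian of the quartic is [2 - 12 * strip_parabola]; this is
   what fixes [strip_rate]. *)
Lemma strip_quartic_step u : 0 <= u <= strip_width ->
  strip_rate * strip_quartic u <= strip_quartic (u + 1) + strip_quartic (u - 1).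
Proof.
move=> Hu; have /andP [Hp _] := strip_parabola_bounds Hu.
have HW2 : strip_width ^+ 2 != 0 by rewrite expf_neq0 // gt_eqF // strip_width_gt0.
have -> : strip_quartic (u + 1) + strip_quartic (u - 1) =
    2 * strip_quartic u + 2 - 12 * strip_parabola u.
  by rewrite /strip_quartic /strip_parabola; ring.
have -> : strip_rate * strip_quartic u = 2 * strip_quartic u - 12 * strip_parabola u
    - 12 * (strip_parabola u ^+ 2 / strip_width ^+ 2).
  by rewrite /strip_rate /strip_quartic; field; rewrite nat1r pnatr_eq0.
have : 0 <= strip_parabola u ^+ 2 / strip_width ^+ 2.
  by rewrite divr_ge0 ?exprn_ge0 // ltW // strip_width_gt0.
by move: (_ / _) => X; lra.
Qed.

Lemma strip_test_step y : (b < y <= b.*2)%N ->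
  strip_rate * strip_test y <= strip_test y.+1 + strip_test y.-1.
Proof.
case/andP=> Hby Hy.
rewrite (@strip_testE y) ?(ltnW Hby) ?(leq_trans Hy) //.
rewrite (@strip_testE y.+1); last by apply/andP; split; lia.
rewrite (@strip_testE y.-1); last by apply/andP; split; lia.
have -> : (y.+1 - b = (y - b).+1)%N by lia.
have -> : (y.-1 - b = (y - b).-1)%N by lia.
have Hyb : (0 < y - b)%N by lia.
have -> : ((y - b).-1%:R : R) = (y - b)%:R - 1.
  by rewrite -[in RHS](prednK Hyb) -natr1 addrK.
rewrite -natr1; apply: strip_quartic_step.
by rewrite ler0n /strip_width ler_nat; lia.
Qed.

Lemma strip_test_bounds z : 0 <= strip_test z <= strip_test_max.
Proof.
have HW := strip_width_gt0.
rewrite /strip_test; case: ifP => [Hz|_]; last first.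
  by rewrite lexx ltW // strip_test_max_gt0.
have Hu : 0 <= ((z - b)%:R : R) <= strip_width.
  by rewrite ler0n /strip_width ler_nat; move: Hz; lia.
have /andP [hp0 hp1] := strip_parabola_bounds Hu.
rewrite /strip_quartic /strip_test_max.
move: (strip_parabola _) (strip_width) hp0 hp1 HW => p W hp0 hp1 HW.
have HW2 : 0 <= W ^+ 2 by rewrite exprn_ge0 // ltW.
rewrite mulr_ge0 ?addr_ge0 //=.
rewrite (_ : 5 * W ^+ 4 / 16 = W ^+ 2 / 4 * (W ^+ 2 / 4 + W ^+ 2)); last by field.
by apply: ler_pM => //; [rewrite addr_ge0 | rewrite lerD2r].
Qed.

Lemma strip_rate_ge0 : (2 <= b)%N -> 0 <= strip_rate.
Proof.
move=> Hb; rewrite /strip_rate subr_ge0 ler_pdivrMr ?exprn_gt0 ?strip_width_gt0 //.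
have : (3 : R) <= strip_width by rewrite /strip_width ler_nat; lia.
by move=> H3; nra.
Qed.

(* Bernoulli for [strip_rate = 2 (1 - 6/W^2)] over [L < W^2] steps. *)
Lemma strip_rate_expn_ge L : (6 <= b)%N -> (L < b.+1 ^ 2)%N ->
  2 ^+ L * (1 / 2) ^+ 16 <= strip_rate ^+ L.
Proof.
move=> Hb HL; set W := strip_width; have HW : 0 < W := strip_width_gt0.
have HW2 : 48 <= W ^+ 2.
  have : (7 : R) <= W by rewrite /W /strip_width ler_nat; lia.
  by move=> H7; nra.
set a := 6 / W ^+ 2.
have -> : strip_rate = 2 * (1 - a) by rewrite /strip_rate /a -/W; field; rewrite nat1r pnatr_eq0.
have Ha0 : 0 <= a by rewrite /a divr_ge0 // exprn_ge0 // ltW.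
have Ha1 : a <= 1 by rewrite /a ler_pdivrMr ?exprn_gt0 //; lra.
set q := ((b.+1 ^ 2 %/ 16).+1)%N.
have HLq : (L <= q * 16)%N by apply: ltnW; apply: leq_trans HL _; apply: ltnW; exact: ltn_ceil.
have Hq16 : q%:R * 16 <= W ^+ 2 + 16.
  rewrite /W /strip_width -natrX (_ : (16 : R) = 16%:R) // -natrM -natrD ler_nat.
  by rewrite /q mulSn addnC leq_add2r leq_divM.
have Hqa : q%:R * a <= 1 / 2 by rewrite /a mulrA ler_pdivrMr ?exprn_gt0 //; lra.
have Hhalf : 1 / 2 <= (1 - a) ^+ q.
  by apply: le_trans (bernoulli_ler q (introT andP (conj Ha0 Ha1))); lra.
rewrite [X in _ <= X]exprMn ler_pM2l ?exprn_gt0 //.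
apply: (@le_trans _ _ ((1 - a) ^+ (q * 16))); last by apply: ler_wiXn2l => //; lra.
by rewrite exprM ler_pXn2r // nnegrE ?exprn_ge0 //; lra.
Qed.

Definition strip_mid : nat := b + b./2 + 1.

Lemma strip_mid_bounds : (2 <= b)%N -> (b < strip_mid <= b.*2)%N.
Proof. by move=> Hb; have := odd_double_half b; rewrite /strip_mid; case: (odd b) => /=; lia. Qed.

Lemma strip_test_mid : (2 <= b)%N -> strip_width ^+ 4 / 8 <= strip_test strip_mid.
Proof.
move=> Hb; have Hhalf := odd_double_half b.
rewrite /strip_test strip_mid_bounds //.
have -> : (strip_mid - b = (b./2).+1)%N by rewrite /strip_mid; lia.
set u : R := (b./2).+1%:R; set W := strip_width.
have Hu1 : W <= 2 * u by rewrite /u /W /strip_width -natrM ler_nat; case: (odd b) Hhalf => /=; lia.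
have Hu2 : 2 * u <= W + 1.
  by rewrite /u /W /strip_width -natrM natr1 ler_nat; case: (odd b) Hhalf => /=; lia.
have HW3 : 3 <= W by rewrite /W /strip_width ler_nat; lia.
have Hp : W ^+ 2 / 8 <= strip_parabola u by rewrite /strip_parabola -/W; nra.
have HW2 : 0 <= W ^+ 2 by rewrite sqr_ge0.
rewrite /strip_quartic -/W (_ : W ^+ 4 / 8 = W ^+ 2 / 8 * W ^+ 2); last first.
  by rewrite (_ : W ^+ 4 = W ^+ 2 * W ^+ 2) ?(@exprD _ _ 2 2) //; field.
by apply: ler_pM => //; [rewrite divr_ge0 | lra].
Qed.

End Strip.

(** * Lower bounds for the two phases *)

Section Counting.
Context {R : realFieldType}.

Lemma strip_count_lower b m L y : (2 <= b)%N ->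
  strip_rate b ^+ L * strip_test b y <= (strip_test_max b : R) * (staged_count b m true y L)%:R.
Proof.
move=> Hb; have Hrate := @strip_rate_ge0 R _ Hb.
have Hmax0 := ltW (@strip_test_max_gt0 R b).
elim: L y => [|L IH] y.
  by rewrite expr0 mul1r /staged_count /= mulr1; case/andP: (@strip_test_bounds R b y).
have Hnext z : strip_rate b ^+ L * strip_test b z <= strip_test_max b *
    (if (b < z <= b.*2)%N then staged_count b m true z L else 0%N)%:R :> R.
  by case: ifP => Hz; [exact: IH | rewrite /strip_test Hz !mulr0].
rewrite staged_count_stripS natrD mulrDr.
case: (boolP (b < y <= b.*2)%N) => Hy; last first.
  by rewrite /strip_test (negbTE Hy) mulr0 -mulrDr mulr_ge0 ?addr_ge0.
rewrite exprSr -mulrA; apply: le_trans (lerD (Hnext y.+1) (Hnext y.-1)).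
by rewrite -mulrDr ler_wpM2l ?exprn_ge0 // strip_test_step.
Qed.

Lemma strip_count_mid_lower b L : (6 <= b)%N -> (L < b.+1 ^ 2)%N ->
  (5 * 2 ^+ 15)^-1 * 2 ^+ L <= (staged_count b (strip_mid b) true (strip_mid b) L)%:R :> R.
Proof.
move=> Hb HL; have Hb2 : (2 <= b)%N by lia.
have HW := @strip_width_gt0 R b.
rewrite -(ler_pM2l (@strip_test_max_gt0 R b)).
apply: le_trans _ (strip_count_lower (strip_mid b) L (strip_mid b) Hb2).
have -> : strip_test_max b * ((5 * 2 ^+ 15)^-1 * 2 ^+ L) =
    2 ^+ L * (1 / 2) ^+ 16 * (strip_width b ^+ 4 / 8) :> R by rewrite /strip_test_max; field.
apply: ler_pM; rewrite ?strip_rate_expn_ge ?strip_test_mid //.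
- by rewrite mulr_ge0 // exprn_ge0 // divr_ge0.
- by rewrite divr_ge0 // exprn_ge0 // ltW.
Qed.

(* Walks frozen at [m] in [absorb_iter] are the ones switching to the strip phase. *)
Lemma climb_count_lower (k : R) b m N : (2 <= m)%N -> 0 <= k ->
  (forall L, (L <= N)%N -> k * 2 ^+ L <= (staged_count b m true m L)%:R) ->
  forall L y, (L <= N)%N -> (0 < y < m)%N ->
    k * absorb_iter m L (frozen_top m) y <= (staged_count b m false y L)%:R.
Proof.
move=> Hm Hk Hstrip; elim=> [|L IH] y HL Hy.
  by rewrite /= /frozen_top leqNgt (proj2 (andP Hy)) mulr0 ler0n.
case/andP: Hy => Hy0 Hym.
rewrite absorb_iterS_inner ?Hy0 ?Hym // staged_count_climbS natrD mulrDr.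
apply: lerD.
- rewrite Hym; case: (eqVneq y.+1 m) => [Ey|Ey].
    rewrite Ey absorb_iter_frozen ?leqnn ?orbT // /frozen_top leqnn mulr1.
    exact: Hstrip (ltnW HL).
  by apply: IH (ltnW HL) _; rewrite /= ltn_neqAle Ey Hym.
- case: (ltnP 1 y) => Hy1.
    have Hym' : (y.-1 < m)%N by apply: leq_ltn_trans (leq_pred _) Hym.
    rewrite (ltnW Hym') (ltn_eqF Hym'); apply: IH (ltnW HL) _; lia.
  have -> : y = 1%N by lia.
  by rewrite absorb_iter_frozen //= /frozen_top leqNgt (leq_trans _ Hm) // !mulr0.
Qed.

Lemma staged_count_lower b N : (10 <= b)%N -> (b * b <= N.+1 < b.+1 * b.+1)%N ->
  (5 * 2 ^+ 15)^-1 * 2 ^+ N <=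
    8 * (strip_mid b)%:R * (staged_count b (strip_mid b) false 1 N)%:R :> R.
Proof.
move=> Hb HN; have Hhalf := odd_double_half b.
set m := strip_mid b; set k : R := (5 * 2 ^+ 15)^-1.
have Hm2 : (2 <= m)%N by rewrite /m /strip_mid; lia.
have Hk : 0 <= k by rewrite invr_ge0 mulr_ge0 ?exprn_ge0.
have Hstrip L : (L <= N)%N -> k * 2 ^+ L <= (staged_count b m true m L)%:R.
  by move=> HL; apply: strip_count_mid_lower; lia.
have Hclimb := climb_count_lower Hm2 Hk Hstrip (y := 1) (leqnn N) Hm2.
have Hfrozen : 2 ^+ N / 8 <= m%:R * absorb_iter m N (frozen_top m) 1 :> R.
  by apply: absorb_iter_frozen_top_ge => //; rewrite /m /strip_mid; case: (odd b) Hhalf => /=; nia.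
apply: (@le_trans _ _ (8 * k * (m%:R * absorb_iter m N (frozen_top m) 1))).
  by rewrite (_ : k * 2 ^+ N = 8 * k * (2 ^+ N / 8)); [rewrite ler_wpM2l ?mulr_ge0 | field].
rewrite (_ : 8 * k * _ = 8 * m%:R * (k * absorb_iter m N (frozen_top m) 1)); last by ring.
by rewrite ler_wpM2l ?mulr_ge0 ?Hclimb.
Qed.

Lemma staged_count_le_num_bounded_walks n N : n = N.+1 -> (2 <= isqrt n)%N ->
  (staged_count (isqrt n) (strip_mid (isqrt n)) false 1 N <= num_bounded_walks n)%N.
Proof.
move=> HnN Hb; have Hmid := strip_mid_bounds Hb.
rewrite -staged_count_from0 -?HnN; last by move: Hmid; lia.
exact: staged_count_le_card.
Qed.

End Counting.

Lemma natr_isqrt_le_sqrt (R : rcfType) n : (isqrt n)%:R <= Num.sqrt (n%:R : R).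
Proof.
rewrite -(ger0_norm (ler0n R (isqrt n))) -sqrtr_sqr; apply: ler_wsqrtr.
by rewrite -natrX ler_nat expnS expn1 isqrt_sq_le.
Qed.

Theorem lemma12 (R : realType) :
  exists2 c : R, 0 < c &
    exists N : nat, forall n : nat, (N <= n)%N ->
      c * (2 ^+ n / Num.sqrt (n%:R)) <= (num_bounded_walks n)%:R.
Proof.
pose k : R := (5 * 2 ^+ 15)^-1.
exists (k / 32); first by rewrite divr_gt0 // invr_gt0 mulr_gt0 // exprn_gt0.
exists 100%N => n Hn.
have Hsq := isqrt_sq_le n; have HsqS := isqrtS_sq_gt n.
set b := isqrt n in Hsq HsqS; set m := strip_mid b.
have Hb : (10 <= b)%N by nia.
have [N HnN] : exists N, n = N.+1 by exists n.-1; lia.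
have Hcount := @staged_count_lower R b N Hb ltac:(rewrite -HnN; lia).
have Hwalks := staged_count_le_num_bounded_walks HnN ltac:(rewrite -/b; lia).
set s := Num.sqrt (n%:R : R).
have Hs : 0 < s by rewrite sqrtr_gt0 ltr0n; lia.
have Hms : m%:R <= 2 * s.
  apply: le_trans (_ : 2 * b%:R <= _); last by rewrite ler_pM2l ?natr_isqrt_le_sqrt.
  by rewrite -natrM ler_nat /m /strip_mid; have := odd_double_half b; case: (odd b) => /=; lia.
apply: le_trans (_ : (staged_count b m false 1 N)%:R <= _); last by rewrite ler_nat; exact: Hwalks.
rewrite HnN exprS (_ : k / 32 * (2 * 2 ^+ N / s) = k * 2 ^+ N / (16 * s)); last by field; rewrite gt_eqF.
rewrite ler_pdivrMr ?mulr_gt0 //; apply: le_trans Hcount _.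
by rewrite -/m mulrC ler_wpM2l //; lra.
Qed.
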